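(* Let $G$ be a transcendental entire function and $g = G'$. Let $\Gamma$ be a curve tending to infinity, meeting no zero of $g$, on which $\mathrm{Im}\, G(z) = \beta$ is constant ($\beta\in\mathbb{R}$) and $X = \mathrm{Re}\, G(z)$ increases as $\Gamma$ is followed towards infinity, with $X \geq \alpha$ for some $\alpha \in \mathbb{R}$. Suppose that $(z_n)$ is a sequence tending to infinity on $\Gamma$ such that $v_n = G(z_n) = X_n + i\beta$ satisfies $v_n = o(|z_n|^2)$ as $n\to\infty$. Then the trajectory of the flow $\dot z = \overline{g(z)}$ which follows $\Gamma$ takes infinite time in tending to infinity.
   Context: Trajectories of $\dot z = \overline{g(z)}$ (paths with $z'(t)=\overline{g(z(t))}$) are level curves of $\mathrm{Im}\, G$ on which $\mathrm{Re}\, G$ increases with $t$. It is not assumed that $X \to +\infty$ as $z\to\infty$ on $\Gamma$. *)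

From Stdlib Require Import Reals.
From Coquelicot Require Import Coquelicot.

Definition is_poly_fun (F : C -> C) : Prop :=
  exists (n : nat) (a : nat -> C),
    forall z : C, F z = sum_n (fun k => Cmult (a k) (pow_n z k)) n.

(* [G] is entire with complex derivative [g] (Coquelicot's [is_derive] over
   the absolute ring [C] is the complex derivative). *)
Definition entire_with_deriv (G g : C -> C) : Prop :=
  forall z : C, is_derive (K := C_AbsRing) (V := C_NormedModule) G z (g z).

Definition transcendental_entire (G : C -> C) : Prop :=
  (exists g : C -> C, entire_with_deriv G g) /\ ~ is_poly_fun G.

(* Along a trajectory of [z' = conj (g z)], [d/dt Re G(w) = |g(w)|^2 = |w'|^2], so Cauchy-Schwarz gives
   [|w(b) - w(a)|^2 <= (b - a) (Re G(w(b)) - Re G(w(a)))].  If the trajectory following Gamma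
   reached infinity at a finite time T, it would pass through every point z of Gamma beyond
   w(T/2), so that [Re G(z) >= |z|^2 / (2T) - O(1)] on Gamma, contradicting [G(z_n) = o(|z_n|^2)]. *)

From Stdlib Require Import Reals Lra.
From Coquelicot Require Import Coquelicot.
Open Scope R_scope.

Lemma Cmod_le_2_Rmax (z : C) : Cmod z <= 2 * Rmax (Rabs (Re z)) (Rabs (Im z)).
Proof.
  assert (Hsqrt2 : sqrt 2 <= 2).
  { pose proof (sqrt_sqrt 2 ltac:(lra)). pose proof (sqrt_pos 2). nra. }
  assert (Hmax : 0 <= Rmax (Rabs (Re z)) (Rabs (Im z))).
  { eapply Rle_trans; [apply Rabs_pos | apply Rmax_l]. }
  pose proof (Cmod_2Rmax z). unfold Re, Im in *. nra.
Qed.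

Lemma derivable_pt_lim_Re_path (w : R -> C) (t : R) (l : C) :
  is_derive (K := R_AbsRing) w t l -> derivable_pt_lim (fun u => Re (w u)) t (Re l).
Proof.
  intros Hw. apply is_derive_Reals.
  exact (filterdiff_comp' w fst t _ fst Hw (filterdiff_linear _ is_linear_fst)).
Qed.

Lemma derivable_pt_lim_Im_path (w : R -> C) (t : R) (l : C) :
  is_derive (K := R_AbsRing) w t l -> derivable_pt_lim (fun u => Im (w u)) t (Im l).
Proof.
  intros Hw. apply is_derive_Reals.
  exact (filterdiff_comp' w snd t _ snd Hw (filterdiff_linear _ is_linear_snd)).
Qed.

Lemma path_bounded_on_segment (gamma : R -> C) (S : R) :
  0 <= S ->
  (forall s, 0 <= s <= S -> continuity_pt (fun u => Re (gamma u)) s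
                            /\ continuity_pt (fun u => Im (gamma u)) s) ->
  exists M, forall s, 0 <= s <= S -> Cmod (gamma s) <= M.
Proof.
  intros HS Hcont.
  destruct (continuity_ab_maj (fun u => Cmod (gamma u)) 0 S HS) as [smax [Hmax _]].
  - intros s Hs. destruct (Hcont s Hs) as [HRe HIm].
    assert (Hsq : forall f, continuity_pt f s -> continuity_pt (fun u => f u ^ 2) s).
    { intros f Hf. simpl. apply continuity_pt_mult; [exact Hf |].
      apply continuity_pt_mult; [exact Hf | apply continuity_pt_const; intros ??; reflexivity]. }
    apply (continuity_pt_ext (fun u => sqrt (Re (gamma u) ^ 2 + Im (gamma u) ^ 2))).
    { intros u. rewrite <- Cmod2_alt. apply sqrt_pow2, Cmod_ge_0. }
    apply (continuity_pt_comp (fun u => Re (gamma u) ^ 2 + Im (gamma u) ^ 2) sqrt).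
    + apply continuity_pt_plus; apply Hsq; assumption.
    + apply continuity_pt_sqrt. apply Rplus_le_le_0_compat; apply pow2_ge_0.
  - exists (Cmod (gamma smax)). exact Hmax.
Qed.

Lemma at_left_p_infty_exceeds (f : R -> R) (T t0 M : R) :
  t0 < T -> filterlim f (at_left T) (Rbar_locally p_infty) ->
  exists t, t0 < t < T /\ M < f t.
Proof.
  intros Ht0 Hf.
  destruct (Hf (fun x => M < x) (ex_intro _ M (fun x Hx => Hx))) as [d Hd].
  set (t := T - Rmin d (T - t0) / 2).
  assert (Hpos : 0 < Rmin d (T - t0)) by (apply Rmin_pos; [apply cond_pos | lra]).
  pose proof (Rmin_l d (T - t0)). pose proof (Rmin_r d (T - t0)).
  exists t. split; [unfold t; lra |].
  apply Hd; [| unfold t; lra].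
  change (Rabs (t - T) < d). unfold t. rewrite Rabs_left; lra.
Qed.

Lemma far_point_Re_le (f : C -> C) (zs : nat -> C) (R0 eps : R) :
  0 <= R0 -> 0 < eps ->
  is_lim_seq (fun n => Cmod (zs n)) p_infty ->
  is_lim_seq (fun n => Cmod (f (zs n)) / Cmod (zs n) ^ 2) 0 ->
  exists n, R0 < Cmod (zs n) /\ Re (f (zs n)) <= eps * Cmod (zs n) ^ 2.
Proof.
  intros HR0 Heps Hfar Hsmall.
  apply is_lim_seq_spec in Hfar, Hsmall.
  destruct (filter_and _ _ (Hfar R0) (Hsmall (mkposreal _ Heps))) as [N HN].
  destruct (HN N (le_n N)) as [Hr Hquot]. cbn [pos] in Hquot.
  exists N. split; [exact Hr |].
  set (r := Cmod (zs N)) in *.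
  rewrite Rminus_0_r in Hquot. apply (Rle_lt_trans _ _ _ (Rle_abs _)) in Hquot.
  apply (Rmult_lt_compat_r (r ^ 2)) in Hquot; [| apply pow_lt; lra].
  unfold Rdiv in Hquot. rewrite Rmult_assoc, Rinv_l, Rmult_1_r in Hquot by (apply pow_nonzero; lra).
  pose proof (Rle_trans _ _ _ (Rle_abs _) (re_le_Cmod (f (zs N)))). lra.
Qed.

Section EntireTrajectories.

Variables G g : C -> C.
Hypothesis HG : entire_with_deriv G g.

Lemma Re_entire_differentiable (x y : R) :
  differentiable_pt_lim (fun u v => Re (G (u, v))) x y (Re (g (x, y))) (- Im (g (x, y))).
Proof.
  intros eps.
  destruct (proj2 (HG (x, y)) (x, y) (fun P HP => HP) (pos_div_2 eps)) as [d Hd].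
  exists (pos_div_2 d). intros u v Hu Hv. simpl in *.
  set (h := minus (u, v) (x, y)).
  set (m := Rmax (Rabs (u - x)) (Rabs (v - y))).
  assert (Hh : Cmod h <= 2 * m) by apply (Cmod_le_2_Rmax h).
  assert (Hm : m < d / 2) by (apply Rmax_lub_lt; assumption).
  specialize (Hd (u, v) ltac:(change (Cmod h < d); lra)).
  match type of Hd with norm ?err <= _ => set (E := err) in Hd end.
  change (Cmod E <= eps / 2 * Cmod h) in Hd.
  replace (Re (G (u, v)) - Re (G (x, y)) - (Re (g (x, y)) * (u - x) + - Im (g (x, y)) * (v - y)))
    with (Re E).
  2: { unfold E, h. destruct (G (u, v)), (G (x, y)), (g (x, y)).
       unfold minus, plus, opp, scal. simpl. unfold Cplus, Copp, Cmult. simpl. ring. }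
  pose proof (re_le_Cmod E). pose proof (cond_pos eps).
  assert (eps / 2 * Cmod h <= eps * m) by nra.
  lra.
Qed.

Lemma trajectory_Re_G_derive (w : R -> C) (t : R) :
  is_derive (K := R_AbsRing) w t (Cconj (g (w t))) ->
  derivable_pt_lim (fun u => Re (G (w u))) t (Cmod (g (w t)) ^ 2).
Proof.
  intros Hw.
  pose proof (derivable_pt_lim_comp_2d _ _ _ _ _ _ _ _
    (Re_entire_differentiable (Re (w t)) (Im (w t)))
    (derivable_pt_lim_Re_path w t _ Hw) (derivable_pt_lim_Im_path w t _ Hw)) as H.
  unfold Re, Im in H. rewrite <- surjective_pairing in H.
  replace (Cmod (g (w t)) ^ 2) with
    (fst (g (w t)) * fst (Cconj (g (w t))) + - snd (g (w t)) * snd (Cconj (g (w t)))).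
  2: { rewrite Cmod2_alt. destruct (g (w t)). simpl. ring. }
  apply is_derive_Reals. apply is_derive_Reals in H.
  apply (is_derive_ext _ _ _ _ (fun u => f_equal (fun z => Re (G z)) (eq_sym (surjective_pairing (w u))))).
  exact H.
Qed.

Lemma trajectory_displacement_sq (w : R -> C) (a b : R) :
  a <= b ->
  (forall t, a <= t <= b -> is_derive (K := R_AbsRing) w t (Cconj (g (w t)))) ->
  Cmod (w b - w a) ^ 2 <= (b - a) * (Re (G (w b)) - Re (G (w a))).
Proof.
  intros Hab Hw.
  destruct (Req_dec a b) as [<- | Hne].
  { replace (w a - w a)%C with (RtoC 0) by ring. rewrite Cmod_0. lra. }
  set (p := Re (w b) - Re (w a)). set (q := Im (w b) - Im (w a)).
  set (lam := b - a). set (K := (p ^ 2 + q ^ 2) / lam).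
  (* [psi] is nonincreasing, and [psi b <= psi a] is the claim *)
  set (psi := fun t => 2 * (p * Re (w t) + q * Im (w t)) - (lam * Re (G (w t)) + K * t)).
  set (dpsi := fun t => 2 * (p * Re (Cconj (g (w t))) + q * Im (Cconj (g (w t))))
                        - (lam * Cmod (g (w t)) ^ 2 + K * 1)).
  assert (Hpsi : forall t, a <= t <= b -> derivable_pt_lim psi t (dpsi t)).
  { intros t Ht. specialize (Hw t Ht).
    pose proof (derivable_pt_lim_Re_path w t _ Hw) as HRe.
    pose proof (derivable_pt_lim_Im_path w t _ Hw) as HIm.
    pose proof (trajectory_Re_G_derive w t Hw) as HX.
    exact (derivable_pt_lim_minus _ _ _ _ _
      (derivable_pt_lim_scal _ 2 _ _ (derivable_pt_lim_plus _ _ _ _ _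
         (derivable_pt_lim_scal _ p _ _ HRe) (derivable_pt_lim_scal _ q _ _ HIm)))
      (derivable_pt_lim_plus _ _ _ _ _
         (derivable_pt_lim_scal _ lam _ _ HX) (derivable_pt_lim_scal _ K _ _ (derivable_pt_lim_id t)))). }
  (* completing the square: [lam * dpsi = - |lam * g(w) - (p - i q)|^2] *)
  assert (Hdpsi : forall t, dpsi t <= 0).
  { intros t. unfold dpsi, K. rewrite Cmod2_alt.
    destruct (g (w t)) as [x y]. unfold Cconj, Re, Im. cbn [fst snd].
    assert (Hlam : 0 < lam) by (unfold lam; lra).
    assert (Hsq : lam * (2 * (p * x + q * - y) - (lam * (x ^ 2 + y ^ 2) + (p ^ 2 + q ^ 2) / lam * 1))
                  = - ((lam * x - p) ^ 2 + (lam * y + q) ^ 2)) by (field; lra).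
    apply (Rmult_le_reg_l lam); [exact Hlam |]. rewrite Rmult_0_r, Hsq.
    pose proof (pow2_ge_0 (lam * x - p)). pose proof (pow2_ge_0 (lam * y + q)). lra. }
  destruct (MVT_gen psi a b dpsi) as [c [Hc Hmvt]];
    rewrite Rmin_left, Rmax_right in * by lra.
  - intros t Ht. apply is_derive_Reals, Hpsi. lra.
  - intros t Ht. exact (derivable_continuous_pt _ _ (exist _ _ (Hpsi t Ht))).
  - assert (Hpq : Cmod (w b - w a) ^ 2 = p ^ 2 + q ^ 2).
    { unfold p, q. rewrite Cmod2_alt. destruct (w b), (w a). cbn. ring. }
    assert (HK : K * (b - a) = p ^ 2 + q ^ 2) by (unfold K, lam; field; lra).
    assert (Hdec : dpsi c * (b - a) <= 0) by (pose proof (Hdpsi c); nra).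
    rewrite Hpq. unfold psi, p, q in *. unfold lam in *. nra.
Qed.
End EntireTrajectories.

Section TrajectoryAlongCurve.

Variables (G g : C -> C) (gamma : R -> C) (T : R) (w : R -> C).
Hypothesis HG : entire_with_deriv G g.
Hypothesis gamma_continuous : forall s : R, 0 <= s ->
  continuity_pt (fun u => Re (gamma u)) s /\ continuity_pt (fun u => Im (gamma u)) s.
Hypothesis Re_G_gamma_increasing : forall s1 s2 : R, 0 <= s1 -> s1 < s2 ->
  Re (G (gamma s1)) < Re (G (gamma s2)).
Hypothesis w_on_gamma : forall t : R, 0 < t < T -> exists s : R, 0 <= s /\ w t = gamma s.
Hypothesis w_trajectory : forall t : R, 0 < t < T ->
  is_derive (K := R_AbsRing) w t (Cconj (g (w t))).
Hypothesis w_blows_up : filterlim (fun t => Cmod (w t)) (at_left T) (Rbar_locally p_infty).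

Lemma curve_param_le_of_Re_G_le (s1 s2 : R) : 0 <= s1 -> 0 <= s2 ->
  Re (G (gamma s1)) <= Re (G (gamma s2)) -> s1 <= s2.
Proof.
  intros Hs1 Hs2 HX. destruct (Rle_or_lt s1 s2) as [Hle | Hlt]; [exact Hle |].
  pose proof (Re_G_gamma_increasing s2 s1 Hs2 Hlt). lra.
Qed.

Lemma trajectory_reaches_curve (t0 s : R) : 0 < t0 < T -> 0 <= s ->
  Re (G (w t0)) <= Re (G (gamma s)) -> exists t, t0 <= t < T /\ w t = gamma s.
Proof.
  intros Ht0 Hs HX0.
  set (X := fun t => Re (G (w t))).
  destruct (path_bounded_on_segment gamma s Hs (fun u Hu => gamma_continuous u (proj1 Hu)))
    as [M HM].
  destruct (at_left_p_infty_exceeds _ T t0 M (proj2 Ht0) w_blows_up) as [t1 [Ht1 Hfar]].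
  assert (HX1 : Re (G (gamma s)) < X t1).
  { destruct (w_on_gamma t1 ltac:(lra)) as [s1 [Hs1 Hw1]].
    unfold X. rewrite Hw1 in *. apply Re_G_gamma_increasing; [exact Hs |].
    destruct (Rle_or_lt s1 s) as [Hle | Hlt]; [| exact Hlt].
    pose proof (HM s1 (conj Hs1 Hle)). lra. }
  assert (Hcross : exists t, t0 <= t <= t1 /\ X t = Re (G (gamma s))).
  { destruct (Rle_lt_or_eq_dec _ _ HX0) as [Hlt | Heq]; [| exists t0; split; [lra | exact Heq]].
    destruct (Ranalysis5.IVT_interv (fun t => X t - Re (G (gamma s))) t0 t1) as [t [Ht HXt]].
    - intros u Hu. apply continuity_pt_minus.
      + exact (derivable_continuous_pt _ _
                 (exist _ _ (trajectory_Re_G_derive G g HG w u (w_trajectory u ltac:(lra))))).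
      + apply continuity_pt_const. intros ? ?. reflexivity.
    - lra.
    - unfold X. lra.
    - lra.
    - exists t. split; [exact Ht | lra]. }
  destruct Hcross as [t [Ht HXt]].
  destruct (w_on_gamma t ltac:(lra)) as [s' [Hs' Hw]].
  exists t. split; [lra |].
  unfold X in HXt. rewrite Hw in HXt |- *.
  f_equal. apply Rle_antisym; apply curve_param_le_of_Re_G_le; auto; lra.
Qed.

Lemma curve_displacement_sq (t0 s : R) : 0 < t0 < T -> 0 <= s ->
  Re (G (w t0)) <= Re (G (gamma s)) ->
  Cmod (gamma s - w t0) ^ 2 <= (T - t0) * (Re (G (gamma s)) - Re (G (w t0))).
Proof.
  intros Ht0 Hs HX0.
  destruct (trajectory_reaches_curve t0 s Ht0 Hs HX0) as [t [Ht Hwt]].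
  rewrite <- Hwt in HX0 |- *.
  eapply Rle_trans.
  - apply (trajectory_displacement_sq G g HG w t0 t (proj1 Ht)).
    intros u Hu. apply w_trajectory. lra.
  - apply Rmult_le_compat_r; lra.
Qed.

Lemma Re_G_curve_quadratic_growth : 0 < T ->
  exists M K, forall s, 0 <= s -> M < Cmod (gamma s) ->
    Cmod (gamma s) ^ 2 <= 2 * T * Re (G (gamma s)) + K.
Proof.
  intros HT.
  set (t0 := T / 2). assert (Ht0 : 0 < t0 < T) by (unfold t0; lra).
  destruct (w_on_gamma t0 Ht0) as [s0 [Hs0 Hw0]].
  destruct (path_bounded_on_segment gamma s0 Hs0 (fun u Hu => gamma_continuous u (proj1 Hu)))
    as [M HM].
  set (X0 := Re (G (w t0))). set (c := Cmod (w t0)).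
  exists (Rmax M (2 * c)), (- 2 * T * X0). intros s Hs Hfar.
  pose proof (Rmax_l M (2 * c)). pose proof (Rmax_r M (2 * c)).
  assert (HX0 : X0 <= Re (G (gamma s))).
  { unfold X0. rewrite Hw0. left. apply Re_G_gamma_increasing; [exact Hs0 |].
    destruct (Rle_or_lt s s0) as [Hle | Hlt]; [| exact Hlt].
    pose proof (HM s (conj Hs Hle)). lra. }
  (* [|z|^2 / 4 <= |z - w t0|^2 <= T/2 (Re G(z) - X0)] once [|z| > 2 |w t0|] *)
  pose proof (curve_displacement_sq t0 s Ht0 Hs HX0) as Hdisp.
  replace (T - t0) with (T / 2) in Hdisp by (unfold t0; field).
  assert (Htri : Cmod (gamma s) - c <= Cmod (gamma s - w t0)).
  { unfold c. pose proof (Cmod_triangle (gamma s - w t0) (w t0)).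
    replace (gamma s - w t0 + w t0)%C with (gamma s) in * by ring. lra. }
  assert (Hhalf : (Cmod (gamma s) / 2) ^ 2 <= Cmod (gamma s - w t0) ^ 2)
    by (apply pow_incr; pose proof (Cmod_ge_0 (gamma s)); lra).
  fold X0 in Hdisp. nra.
Qed.

End TrajectoryAlongCurve.

Theorem proposition4p1
  (G g : C -> C) (gamma : R -> C) (alpha beta : R) (zs : nat -> C) :
  (* G transcendental entire, g = G' *)
  transcendental_entire G ->
  entire_with_deriv G g ->
  (* Gamma = gamma([0,+oo)) is a curve tending to infinity *)
  (forall s : R, 0 <= s -> continuity_pt (fun u => Re (gamma u)) s
                 /\ continuity_pt (fun u => Im (gamma u)) s) ->
  filterlim (fun s => Cmod (gamma s)) (Rbar_locally p_infty)
            (Rbar_locally p_infty) ->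
  (* Gamma meets no zero of g *)
  (forall s : R, 0 <= s -> g (gamma s) <> 0%C) ->
  (* Im G = beta on Gamma *)
  (forall s : R, 0 <= s -> Im (G (gamma s)) = beta) ->
  (* X = Re G increases as Gamma is followed towards infinity *)
  (forall s1 s2 : R, 0 <= s1 -> s1 < s2 ->
     Re (G (gamma s1)) < Re (G (gamma s2))) ->
  (* X >= alpha on Gamma *)
  (forall s : R, 0 <= s -> alpha <= Re (G (gamma s))) ->
  (* (z_n) on Gamma, tending to infinity, with G(z_n) = o(|z_n|^2) *)
  (forall n : nat, exists s : R, 0 <= s /\ zs n = gamma s) ->
  is_lim_seq (fun n => Cmod (zs n)) p_infty ->
  is_lim_seq (fun n => Cmod (G (zs n)) / (Cmod (zs n)) ^ 2) 0 ->
  (* Conclusion: a trajectory of dz/dt = conj(g(z)) following Gamma cannot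
     tend to infinity in finite time T. *)
  forall (T : R) (w : R -> C),
    0 < T ->
    (forall t : R, 0 < t < T -> exists s : R, 0 <= s /\ w t = gamma s) ->
    (forall t : R, 0 < t < T ->
       is_derive (K := R_AbsRing) w t (Cconj (g (w t)))) ->
    ~ filterlim (fun t => Cmod (w t)) (at_left T) (Rbar_locally p_infty).
Proof.
  intros _ HG Hgamma _ _ _ Hincr _ Hzs Hzinf Hratio T w HT Hw_gamma Hw_traj Hblow.
  destruct (Re_G_curve_quadratic_growth G g gamma T w HG Hgamma Hincr Hw_gamma Hw_traj Hblow HT)
    as [M [K Hgrowth]].
  assert (Heps : 0 < / (4 * T)) by (apply Rinv_0_lt_compat; lra).
  pose proof (Rmax_l M (Rabs K + 1)). pose proof (Rmax_r M (Rabs K + 1)).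
  pose proof (Rabs_pos K). pose proof (Rle_abs K).
  destruct (far_point_Re_le G zs (Rmax M (Rabs K + 1)) _ ltac:(lra) Heps Hzinf Hratio)
    as [n [Hfar HRe]].
  destruct (Hzs n) as [s [Hs Hz]]. rewrite Hz in Hfar, HRe.
  specialize (Hgrowth s Hs ltac:(lra)).
  (* [|z|^2 <= 2T Re G(z) + K <= |z|^2 / 2 + K] contradicts [|z| > |K| + 1] *)
  assert (2 * T * Re (G (gamma s)) <= Cmod (gamma s) ^ 2 / 2).
  { replace (Cmod (gamma s) ^ 2 / 2) with (2 * T * (/ (4 * T) * Cmod (gamma s) ^ 2)) by (field; lra).
    apply Rmult_le_compat_l; lra. }
  nra.
Qed.
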